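(* Let $a,b$ be integers with $0<a<b$ and let $\gamma_1<\gamma_2<\cdots$ be the greedy dissociated sequence starting from $a,b$. For $n\ge1$ let $\mathscr S_n := \sum_{i=1}^n\gamma_i$, $\mathscr T_n := \mathscr S_n+1$, and $D_n := \left\{\sum_{i=1}^n\varepsilon_i\gamma_i:\ \varepsilon_i\in\{-1,0,1\}\right\}$. Then for every $n\ge 1$, $\mathscr T_n\notin D_n$. Consequently, $\gamma_{n+1}\le\mathscr T_n$ for all $n\ge 2$.
   Context: A set $\mathcal S\subseteq\mathbb N$ is dissociated if all of its finite subsets have different sums. The greedy dissociated sequence starting from $a,b$ is defined by $\gamma_1=a$, $\gamma_2=b$, and for $r\ge 3$, $\gamma_r$ is the smallest integer greater than $\gamma_{r-1}$ such that $\{\gamma_1,\dots,\gamma_r\}$ is dissociated. *)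

From HB Require Import structures.
From mathcomp Require Import all_boot all_order all_algebra.
From mathcomp Require Import finmap.
Set Implicit Arguments. Unset Strict Implicit. Unset Printing Implicit Defensive.
Import Order.TTheory GRing.Theory Num.Theory.
Local Open Scope fset_scope.

Definition dissociated (A : {fset nat}) : Prop :=
  forall S1 S2 : {fset nat}, S1 `<=` A -> S2 `<=` A ->
    (\sum_(x <- S1) x)%N = (\sum_(x <- S2) x)%N -> S1 = S2.

Definition first_terms (g : nat -> nat) (r : nat) : {fset nat} :=
  [fset g i | i in iota 1 r].

(* g is the greedy dissociated sequence starting from a, b (indices 1,2,...):
   g 1 = a, g 2 = b, and for r >= 3, g r is the smallest integer > g (r-1)
   such that {g 1, ..., g r} is dissociated. (g 0 is irrelevant.) *)
Definition greedy_dissociated (a b : nat) (g : nat -> nat) : Prop :=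
  g 1 = a /\ g 2 = b /\
  forall r, 3 <= r ->
    [/\ g r.-1 < g r,
        dissociated (first_terms g r) &
        forall m, g r.-1 < m -> m < g r ->
          ~ dissociated (first_terms g r.-1 `|` [fset m])].

Definition Dset (g : nat -> nat) (n : nat) (x : int) : Prop :=
  exists eps : nat -> int,
    (forall i, eps i \in [:: (-1)%R; 0%R; 1%R]) /\
    x = (\sum_(1 <= i < n.+1) eps i * (g i)%:Z)%R.

Definition Ssum (g : nat -> nat) (n : nat) : nat := \sum_(1 <= i < n.+1) g i.
Definition Tsum (g : nat -> nat) (n : nat) : nat := (Ssum g n).+1.

From HB Require Import structures.
From mathcomp Require Import all_boot all_order all_algebra.
From mathcomp Require Import finmap.
From mathcomp Require Import zify.
Set Implicit Arguments. Unset Strict Implicit. Unset Printing Implicit Defensive.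
Import Order.TTheory GRing.Theory Num.Theory.
Local Open Scope fset_scope.

(* Every signed sum of g 1, ..., g n is at most their plain sum S_n < T_n.
   Conversely, an integer m exceeding the sum of a dissociated set A keeps
   A `|` {m} dissociated, since m cannot be balanced by elements of A.  The
   first n terms of the greedy sequence are dissociated, so if g (n+1) were
   larger than T_n > g n, the greedy choice would have taken T_n instead. *)

Lemma fsum_fsubset_le (S A : {fset nat}) : S `<=` A ->
  \sum_(x <- S) x <= \sum_(x <- A) x.
Proof.
by move=> /fsubsetP sSA; apply: uniq_sub_le_big => // m n; rewrite leq_addr.
Qed.

Lemma fsum_fsetD1 (S : {fset nat}) m :
  \sum_(x <- S) x = ((m \in S) * m + \sum_(x <- S `\ m) x)%N.
Proof.
have [mS | mNS] := boolP (m \in S); first by rewrite (big_fsetD1 _ mS) mul1n.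
by rewrite mem_fsetD1 // mul0n.
Qed.

Lemma fsum_fsetU1_le (A : {fset nat}) m :
  \sum_(x <- A `|` [fset m]) x <= \sum_(x <- A) x + m.
Proof.
have [mA | mNA] := boolP (m \in A).
  by rewrite (fsetUidPl _ _ _) ?leq_addr // fsub1set.
by rewrite fsetUC big_fsetU1 // addnC.
Qed.

Lemma dissociated0 : dissociated fset0.
Proof. by move=> S1 S2; rewrite !fsubset0 => /eqP-> /eqP->. Qed.

Lemma dissociated_fsetU1 (A : {fset nat}) m :
  dissociated A -> \sum_(x <- A) x < m -> dissociated (A `|` [fset m]).
Proof.
move=> dissA sumA_lt S1 S2 sS1 sS2.
have subA S : S `<=` A `|` [fset m] -> S `\ m `<=` A.
  move=> /fsubsetP sS; apply/fsubsetP => x /fsetD1P[xm /sS].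
  by rewrite in_fsetU in_fset1 (negbTE xm) orbF.
have sumD1_lt S : S `<=` A `|` [fset m] -> \sum_(x <- S `\ m) x < m.
  by move=> sS; apply: leq_ltn_trans (fsum_fsubset_le (subA S sS)) sumA_lt.
rewrite (fsum_fsetD1 S1 m) (fsum_fsetD1 S2 m) => sum_eq.
have lt1 := sumD1_lt S1 sS1; have lt2 := sumD1_lt S2 sS2.
have memE : (m \in S1) = (m \in S2).
  by move: sum_eq lt1 lt2; case: (m \in S1); case: (m \in S2) => //=; lia.
have /dissA eqD : \sum_(x <- S1 `\ m) x = \sum_(x <- S2 `\ m) x.
  by apply/eqP; rewrite -(eqn_add2l ((m \in S1) * m)) {2}memE sum_eq.
apply/fsetP => x; have [->|xm] := eqVneq x m; first exact: memE.
by move/fsetP/(_ x): (eqD (subA S1 sS1) (subA S2 sS2)); rewrite !in_fsetD1 xm.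
Qed.

Lemma first_terms0 (g : nat -> nat) : first_terms g 0 = fset0.
Proof. by apply/fsetP => x; rewrite inE; apply/imfsetP => -[]. Qed.

Lemma first_termsS (g : nat -> nat) n :
  first_terms g n.+1 = first_terms g n `|` [fset g n.+1].
Proof.
rewrite /first_terms -[n.+1]addn1 iotaD add1n addn1.
apply/fsetP => x; rewrite in_fsetU in_fset1.
apply/imfsetP/orP => [[i /=]|[/imfsetP[i /= iI ->]|/eqP->]].
- rewrite mem_cat inE => /orP[iI|/eqP->] ->; last by right.
  by left; apply/imfsetP; exists i.
- by exists i; rewrite // mem_cat iI.
- by exists n.+1; rewrite //= mem_cat inE eqxx orbT.
Qed.

Lemma fsum_first_terms_le (g : nat -> nat) n :
  \sum_(x <- first_terms g n) x <= Ssum g n.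
Proof.
elim: n => [|n IHn]; first by rewrite first_terms0 big_seq_fset0.
rewrite first_termsS /Ssum big_nat_recr //=.
by apply: leq_trans (fsum_fsetU1_le _ _) _; rewrite leq_add2r.
Qed.

Lemma leq_term_Ssum (g : nat -> nat) n : 0 < n -> g n <= Ssum g n.
Proof. by case: n => // n _; rewrite /Ssum big_nat_recr //= leq_addl. Qed.

Lemma Dset_le_Ssum (g : nat -> nat) n (x : int) :
  Dset g n x -> (x <= (Ssum g n)%:Z)%R.
Proof.
move=> [eps [eps_sign ->]].
rewrite /Ssum (big_morph Posz PoszD (erefl (Posz 0))).
apply: ler_sum => i _; have := eps_sign i; rewrite !inE.
case/or3P => /eqP->; rewrite ?mul1r ?mul0r ?mulN1r //.
by rewrite -subr_ge0 opprK addr_ge0.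
Qed.

Lemma greedy_dissociated_first_terms (a b : nat) (g : nat -> nat) n :
  0 < a -> a < b -> greedy_dissociated a b g -> dissociated (first_terms g n).
Proof.
move=> a_gt0 ab [g1 [g2 greedy]].
have diss1 : dissociated (first_terms g 1).
  rewrite first_termsS first_terms0; apply: dissociated_fsetU1 dissociated0 _.
  by rewrite big_seq_fset0 g1.
case: n => [|[|[|n]]]; last by have [] := greedy n.+3 isT.
- by rewrite first_terms0; exact: dissociated0.
- exact: diss1.
- rewrite first_termsS; apply: dissociated_fsetU1 diss1 _.
  by rewrite first_termsS first_terms0 fset0U big_seq_fset1 g1 g2.
Qed.

Theorem lemma2 (a b : nat) (g : nat -> nat) :
  0 < a -> a < b -> greedy_dissociated a b g ->
  (forall n, 1 <= n -> ~ Dset g n (Tsum g n)%:Z) /\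
  (forall n, 2 <= n -> g n.+1 <= Tsum g n).
Proof.
move=> a_gt0 ab greedy; split=> [n _ /Dset_le_Ssum|n n_ge2].
  by rewrite lez_nat ltnn.
rewrite leqNgt; apply/negP => Tsum_lt.
have [_ _ greedy_min] := greedy.2.2 n.+1 n_ge2.
apply: (greedy_min (Tsum g n)) => //=.
- by rewrite ltnS leq_term_Ssum // ltnW.
- apply: dissociated_fsetU1.
    exact: greedy_dissociated_first_terms greedy.
  by rewrite ltnS fsum_first_terms_le.
Qed.
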